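(* Let $\mathcal{U}$ be a CFI on $X=[0,1]$ with slope interval $S$, let $u\in\mathcal{U}$, and suppose $I=[a,b]\subseteq X$ satisfies $\underline u<u<\bar u$ on $I$. Let $h_{a,b}$ be defined as in the context. Then for every $\varepsilon\in[0,1]$, both $u+\varepsilon h_{a,b}$ and $u-\varepsilon h_{a,b}$ are continuous convex functions on $X$ with $\partial(u\pm\varepsilon h_{a,b})(X)\subseteq S$. Furthermore, $h_{a,b}\equiv0$ on $X$ if and only if there exist three (not necessarily distinct) affine functions $\ell_0,\ell_1,\ell_2$ on $I$ with $u|_I=\max\{\ell_0,\ell_1,\ell_2\}$.
   Context: A CFI is $\mathcal{U}=\{u\in\mathcal{K}(X):\underline u\le u\le\bar u,\ \partial u(X)\subseteq S\}$ with $S=[\underline s,\bar s]$, $\underline u\le\bar u$ continuous convex with $\partial\underline u(X),\partial\bar u(X)\subseteq S$; $\mathcal{K}(X)$ is the set of continuous convex functions on $X$ and $\partial u(X)=\bigcup_{x\in\mathrm{int}X}\partial u(x)$. For $u\in\mathcal{K}(X)$ let $t_u(x;a^+)=u(a)+\partial_+u(a)(x-a)$ and $t_u(x;b^-)=u(b)+\partial_-u(b)(x-b)$. Define $g_{a,b}(x)=0$ for $x\notin[a,b]$ and $g_{a,b}(x)=u(x)-\max\{t_u(x;a^+),t_u(x;b^-)\}$ for $x\in[a,b]$. For a function $\phi$ on $X$, $\mathrm{vex}[\phi](x)=\sup\{g(x): g:X\to\mathbb{R}$ convex, $g\le\phi\}$ (convex envelope). Finally $h_{a,b}=\mathrm{vex}[u+g_{a,b}]-u$.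 *)

From HB Require Import structures.
From mathcomp Require Import all_boot all_order all_algebra.
From mathcomp Require Import all_classical all_reals all_analysis.
Set Implicit Arguments. Unset Strict Implicit. Unset Printing Implicit Defensive.
Import Order.TTheory GRing.Theory Num.Theory.
Import numFieldNormedType.Exports.
Local Open Scope classical_set_scope.
Local Open Scope ring_scope.

Section CFI.
Variable R : realType.

Definition X : set R := `[0, 1].

Definition convex_on_X (f : R -> R) : Prop :=
  forall x y t, x \in X -> y \in X -> 0 <= t <= 1 ->
    f (t * x + (1 - t) * y) <= t * f x + (1 - t) * f y.

Definition cvxK (f : R -> R) : Prop :=
  {within X, continuous f} /\ convex_on_X f.

Definition subdiff (f : R -> R) (x : R) : set R :=
  [set s | forall y, y \in X -> f x + s * (y - x) <= f y].

Definition subdiff_X (f : R -> R) : set R :=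
  [set s | exists2 x, 0 < x < 1 & subdiff f x s].

Definition slopes_in (f : R -> R) (slo shi : R) : Prop :=
  subdiff_X f `<=` `[slo, shi].

Definition dright (f : R -> R) (a : R) : R :=
  lim ((fun h => (f (a + h) - f a) / h) @ 0^'+).
Definition dleft (f : R -> R) (b : R) : R :=
  lim ((fun h => (f b - f (b - h)) / h) @ 0^'+).

Definition tan_right (f : R -> R) (a x : R) : R := f a + dright f a * (x - a).
Definition tan_left (f : R -> R) (b x : R) : R := f b + dleft f b * (x - b).

Definition gab (f : R -> R) (a b : R) (x : R) : R :=
  if (a <= x <= b) then f x - Num.max (tan_right f a x) (tan_left f b x)
  else 0.

Definition vex (phi : R -> R) (x : R) : R :=
  sup [set g x | g in [set g : R -> R | convex_on_X g /\
                                        forall y, y \in X -> g y <= phi y]].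

Definition hab (f : R -> R) (a b : R) (x : R) : R :=
  vex (fun y => f y + gab f a b y) x - f x.

End CFI.

From HB Require Import structures.
From mathcomp Require Import all_boot all_order all_algebra.
From mathcomp Require Import all_classical all_reals all_analysis.
From mathcomp Require Import ring lra.
Import Order.TTheory GRing.Theory Num.Theory.
Import numFieldNormedType.Exports.
Local Open Scope classical_set_scope.
Local Open Scope ring_scope.
Set Implicit Arguments. Unset Strict Implicit. Unset Printing Implicit Defensive.

(* Write phi = u + g_{a,b}: on [a,b] phi = 2u - m, where m is the larger
   of the two tangents, and phi = u elsewhere; so u <= V := vex phi <= phi and
   h_{a,b} = V - u. Then u + eps h = (1 - eps) u + eps V and
   u - eps h = (1 - eps) u + eps W with W = 2u - V, and it suffices that V and W have a
   supporting line with slope in S at every interior point. For V this follows from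
   V = u at 0 and 1. For W, at a contact point V = phi the tangent realising m reflects
   to a supporting line of W; on a component (p, q) of {V < phi} the envelope is affine,
   and the reflected supporting line of u glues with those at p and q.
   Finally V = u exactly when u is affine between the contact sets of the two tangents,
   i.e. when u is the maximum of the two tangents and one more line on [a, b]. *)

Section ConvexOnX.
Variable R : realType.
Implicit Types (f g : R -> R) (m c p q s x y z : R).

Lemma in_X x : (x \in @X R) = (0 <= x <= 1).
Proof.
rewrite /X; apply/idP/idP => [/set_mem /=|H]; first by rewrite in_itv.
by apply/mem_set; rewrite /= in_itv.
Qed.

Definition chord f x y := (f y - f x) / (y - x).

Lemma convex_le_interp f x y z : convex_on_X f -> 0 <= x -> x < y -> y < z -> z <= 1 ->
  (z - x) * f y <= (z - y) * f x + (y - x) * f z.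
Proof.
move=> cf x0 xy yz z1.
have zx : 0 < z - x by lra.
pose t := (z - y) / (z - x).
have t01 : 0 <= t <= 1.
  by apply/andP; split; rewrite /t ?divr_ge0 ?ler_pdivrMr //; lra.
have := cf x z t; rewrite !in_X => /(_ ltac:(lra) ltac:(lra) t01).
have -> : t * x + (1 - t) * z = y by rewrite /t; field; lra.
rewrite -(ler_pM2l zx) => /le_trans; apply.
by rewrite le_eqVlt; apply/orP; left; apply/eqP; rewrite /t; field; lra.
Qed.

Lemma line_le_chordE f x y s : x < y -> (f x + s * (y - x) <= f y) = (s <= chord f x y).
Proof. by move=> xy; rewrite /chord ler_pdivlMr ?subr_gt0 //; apply/idP/idP; lra. Qed.

Lemma chord_le_lineE f x y s : x < y -> (f y + s * (x - y) <= f x) = (chord f x y <= s).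
Proof. by move=> xy; rewrite /chord ler_pdivrMr ?subr_gt0 //; apply/idP/idP; lra. Qed.

Lemma chord_mulK f x y : x != y -> chord f x y * (y - x) = f y - f x.
Proof. by move=> xy; rewrite /chord mulfVK // subr_eq0 eq_sym. Qed.

Lemma chord_le_chordr f x y z : convex_on_X f -> 0 <= x -> x < y -> y < z -> z <= 1 ->
  chord f x y <= chord f x z.
Proof.
move=> cf x0 xy yz z1; have := convex_le_interp cf x0 xy yz z1.
rewrite -chord_le_lineE // => H; have zx : 0 < z - x by lra.
have E : (z - x) * (chord f x z * (x - y)) = (f z - f x) * (x - y).
  by rewrite mulrA (mulrC (z - x)) chord_mulK // lt_eqF //; lra.
by rewrite -(ler_pM2l zx) mulrDr E; lra.
Qed.

Lemma chord_le_chordl f x y z : convex_on_X f -> 0 <= x -> x < y -> y < z -> z <= 1 ->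
  chord f x z <= chord f y z.
Proof.
move=> cf x0 xy yz z1; have := convex_le_interp cf x0 xy yz z1.
rewrite -line_le_chordE // => H; have zx : 0 < z - x by lra.
have E : (z - x) * (chord f x z * (z - y)) = (f z - f x) * (z - y).
  by rewrite mulrA (mulrC (z - x)) chord_mulK // lt_eqF //; lra.
by rewrite -(ler_pM2l zx) mulrDr E; lra.
Qed.

Lemma chord_le_chord_next f x y z : convex_on_X f -> 0 <= x -> x < y -> y < z -> z <= 1 ->
  chord f x y <= chord f y z.
Proof. by move=> *; apply: le_trans (chord_le_chordr _ _ _ _ _) (chord_le_chordl _ _ _ _ _). Qed.

Lemma convex_le_line f m c p q x : convex_on_X f -> 0 <= p -> p <= x -> x <= q -> q <= 1 ->
  f p <= m * p + c -> f q <= m * q + c -> f x <= m * x + c.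
Proof.
move=> cf p0 px xq q1 hp hq.
have [->|xp] := eqVneq x p => //; have [->|xq'] := eqVneq x q => //.
have [px' xq''] : p < x /\ x < q by rewrite !lt_neqAle eq_sym xp xq' px xq.
have := convex_le_interp cf p0 px' xq'' q1.
have qp : 0 < q - p by lra.
by move=> H; rewrite -(ler_pM2l qp); nra.
Qed.

Lemma convex_le_chord f p q x : convex_on_X f -> 0 <= p -> p < q -> q <= 1 ->
  p <= x <= q -> f x <= f p + chord f p q * (x - p).
Proof.
move=> cf p0 pq q1 /andP[px xq].
have lineE y : f p + chord f p q * (y - p) = chord f p q * y + (f p - chord f p q * p) by ring.
rewrite lineE; apply: (convex_le_line cf p0 px xq q1); rewrite -lineE.
  by rewrite subrr mulr0 addr0.
by rewrite chord_mulK ?lt_eqF //; lra.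
Qed.

Lemma chord_le_convex f p q x : convex_on_X f -> 0 <= p -> p < q -> q <= 1 -> 0 <= x <= 1 ->
  (x <= p) || (q <= x) -> f p + chord f p q * (x - p) <= f x.
Proof.
move=> cf p0 pq q1 /andP[x0 x1] /orP[xp|qx].
- have [->|xp'] := eqVneq x p; first by rewrite subrr mulr0 addr0.
  rewrite chord_le_lineE; last by rewrite lt_neqAle xp' xp.
  by apply: chord_le_chord_next => //; rewrite lt_neqAle xp' xp.
- have [->|qx'] := eqVneq x q; first by rewrite chord_mulK ?lt_eqF //; lra.
  rewrite line_le_chordE; last lra.
  by apply: chord_le_chordr => //; rewrite lt_neqAle eq_sym qx' qx.
Qed.

Lemma convex_max f g : convex_on_X f -> convex_on_X g ->
  convex_on_X (fun x => Num.max (f x) (g x)).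
Proof.
move=> cf cg x y t xX yX /[dup] t01 /andP[t0 t1].
have t1' : 0 <= 1 - t by lra.
rewrite ge_max; apply/andP; split.
- apply: (le_trans (cf x y t xX yX t01)).
  by apply: lerD; apply: ler_wpM2l => //; rewrite le_max lexx.
- apply: (le_trans (cg x y t xX yX t01)).
  by apply: lerD; apply: ler_wpM2l => //; rewrite le_max lexx orbT.
Qed.

Lemma convex_affine m c : convex_on_X (fun x => m * x + c).
Proof. by move=> x y t _ _ _; rewrite le_eqVlt; apply/orP; left; apply/eqP; ring. Qed.

Definition support_line f z s := forall w, 0 <= w <= 1 -> f z + s * (w - z) <= f w.

Lemma exists_support_line f z : convex_on_X f -> 0 < z < 1 -> exists s, support_line f z s.
Proof.
move=> cf /andP[z0 z1].
pose E := [set c | exists2 x, 0 <= x < z & c = chord f x z].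
have E0 : E !=set0 by exists (chord f 0 z); exists 0 => //; lra.
have Eub : ubound E (chord f z 1).
  by move=> c [x xz ->]; apply: chord_le_chord_next => //; lra.
have hs : has_sup E by split => //; exists (chord f z 1).
exists (sup E) => w w01.
have [wz|zw|->] := ltgtP w z; last by rewrite subrr mulr0 addr0.
- by rewrite chord_le_lineE //; apply: sup_upper_bound => //; exists w => //; lra.
- rewrite line_le_chordE //; apply: ge_sup => // c [x xz ->].
  by apply: chord_le_chord_next => //; lra.
Qed.

Lemma support_line_glue f z p q s sp sq : 0 <= p -> p < q -> q <= 1 ->
  (forall w, p <= w <= q -> f z + s * (w - z) <= f w) ->
  support_line f p sp -> support_line f q sq -> sp <= s -> s <= sq -> support_line f z s.
Proof.
move=> p0 pq q1 mid Hp Hq sps ssq w w01.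
have := mid p ltac:(lra); have := mid q ltac:(lra) => hq hp.
case: (leP p w) => pw; first case: (leP w q) => wq.
- by apply: mid; lra.
- have : 0 <= (sq - s) * (w - q) by apply: mulr_ge0; lra.
  by have := Hq w w01; lra.
- have : 0 <= (s - sp) * (p - w) by apply: mulr_ge0; lra.
  by have := Hp w w01; lra.
Qed.

(* Equivalent to [convex_on_X f /\ slopes_in f slo shi] (lemmas below), but
   stable under convex combinations. *)
Definition supported_in slo shi f := forall z, 0 < z < 1 ->
  exists2 s, slo <= s <= shi & support_line f z s.

Lemma supported_convex slo shi f : supported_in slo shi f -> convex_on_X f.
Proof.
move=> Hs x y t; rewrite !in_X => /andP[x0 x1] /andP[y0 y1] /andP[t0 t1].
have [->|xy] := eqVneq x y.
  by rewrite -mulrDl -[X in _ <= X]mulrDl addrCA subrr addr0 !mul1r.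
have [->|tn0] := eqVneq t 0; first by rewrite !mul0r !subr0 !mul1r !add0r.
have [->|tn1] := eqVneq t 1; first by rewrite !subrr !mul0r !mul1r !addr0.
set z := t * x + (1 - t) * y.
have zi : 0 < z < 1.
  have t0' : 0 < t by rewrite lt_neqAle eq_sym tn0.
  have t1' : t < 1 by rewrite lt_neqAle tn1.
  by apply/andP; split; case: (ltgtP x y) xy => // h _; rewrite /z; nra.
have [s _ Hsz] := Hs z zi.
have h1 := Hsz x ltac:(lra); have h2 := Hsz y ltac:(lra).
have -> : f z = t * (f z + s * (x - z)) + (1 - t) * (f z + s * (y - z)) by rewrite /z; ring.
by apply: lerD; apply: ler_wpM2l => //; lra.
Qed.

Lemma supported_slopes slo shi f : supported_in slo shi f -> slopes_in f slo shi.
Proof.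
move=> Hs s [z /andP[z0 z1] Hsub].
have hs : support_line f z s by move=> y y01; apply: Hsub; rewrite in_X.
rewrite /= in_itv /=; apply/andP; split.
- have [s0 /andP[s0l _] H0] := Hs (z / 2) ltac:(lra).
  have := H0 z ltac:(lra); have := hs (z / 2) ltac:(lra) => h1 h2.
  have : (s0 - s) * (z / 2) <= 0 by nra.
  by rewrite pmulr_lle0; lra.
- have [s1 /andP[_ s1h] H1] := Hs ((z + 1) / 2) ltac:(lra).
  have := H1 z ltac:(lra); have := hs ((z + 1) / 2) ltac:(lra) => h1 h2.
  have : (s - s1) * ((1 - z) / 2) <= 0 by nra.
  by rewrite pmulr_lle0; lra.
Qed.

Lemma convex_supported slo shi f : convex_on_X f -> slopes_in f slo shi ->
  supported_in slo shi f.
Proof.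
move=> cf sf z zi; have [s hs] := exists_support_line cf zi; exists s => //.
have /sf : subdiff_X f s by exists z => // y; rewrite in_X; exact: hs.
by rewrite /= in_itv.
Qed.

Lemma supported_combination slo shi f g t :
  supported_in slo shi f -> supported_in slo shi g -> 0 <= t <= 1 ->
  supported_in slo shi (fun x => t * f x + (1 - t) * g x).
Proof.
move=> Hf Hg /andP[t0 t1] z zi.
have [sf /andP[sf1 sf2] Hsf] := Hf z zi; have [sg /andP[sg1 sg2] Hsg] := Hg z zi.
exists (t * sf + (1 - t) * sg); first by apply/andP; split; nra.
by move=> w w01; have := Hsf w w01; have := Hsg w w01; nra.
Qed.

Lemma eq_supported_in slo shi f g : (forall x, 0 <= x <= 1 -> f x = g x) ->
  supported_in slo shi f -> supported_in slo shi g.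
Proof.
move=> fg Hf z zi; have [s hs Hs] := Hf z zi; exists s => // w w01.
by rewrite -!fg //; [exact: Hs | lra].
Qed.

End ConvexOnX.

Section ContinuityOnX.
Variable R : realType.
Implicit Types (f g : R -> R) (m c p q x y : R).

Definition contX f := forall x, 0 <= x <= 1 -> forall e : R, 0 < e ->
  exists2 d : R, 0 < d & forall y, 0 <= y <= 1 -> `|y - x| < d -> `|f y - f x| < e.

Lemma contXP f : {within @X R, continuous f} <-> contX f.
Proof.
rewrite subspace_continuousP; split.
- move=> H x x01 e e0.
  have Ax : X x by rewrite /X /= in_itv /=.
  have /cvgrPdist_lt/(_ e e0) := H x Ax.
  rewrite near_withinE => /nbhs_ballP [d /= d0 Hd].
  exists d => // y y01 xy; rewrite distrC; apply: Hd.
    by rewrite /ball /= distrC.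
  by rewrite /X /= in_itv /=.
- move=> H x Ax; apply/cvgrPdist_lt => e e0.
  rewrite near_withinE; apply/nbhs_ballP.
  have x01 : 0 <= x <= 1 by move: Ax; rewrite /X /= in_itv.
  have [d d0 Hd] := H x x01 e e0.
  exists d => //= y; rewrite /ball /= => xy Ay.
  rewrite distrC; apply: Hd; first by move: Ay; rewrite /X /= in_itv.
  by rewrite distrC.
Qed.

Lemma exists_pos_le2 (d e : R) : 0 < d -> 0 < e -> exists m, [/\ 0 < m, m <= d & m <= e].
Proof. by move=> d0 e0; case: (leP d e) => h; [exists d | exists e]; split => //; lra. Qed.

Lemma eq_contX f g : (forall x, 0 <= x <= 1 -> f x = g x) -> contX f -> contX g.
Proof.
move=> fg cf x x01 e e0; have [d d0 Hd] := cf x x01 e e0.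
by exists d => // y y01 yx; rewrite -!fg //; apply: Hd.
Qed.

Lemma contXD f g : contX f -> contX g -> contX (fun x => f x + g x).
Proof. by move=> /contXP cf /contXP cg; apply/contXP; exact: within_continuousD. Qed.

Lemma contXMl m f : contX f -> contX (fun x => m * f x).
Proof. by move=> /contXP cf; apply/contXP => x; apply: cvgM; [exact: cvg_cst | exact: cf]. Qed.

Lemma contXB f g : contX f -> contX g -> contX (fun x => f x - g x).
Proof.
move=> cf cg; apply: (eq_contX (f := fun x => f x + (-1) * g x)) => [x _|]; first ring.
exact/contXD/contXMl.
Qed.

Lemma contX_max f g : contX f -> contX g -> contX (fun x => Num.max (f x) (g x)).
Proof.
move=> /contXP cf /contXP cg; apply/contXP; exact: max_fun_continuous.
Qed.

Lemma contX_affine m c : contX (fun x => m * x + c).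
Proof.
apply/contXP/continuous_subspaceT => x.
by apply: cvgD; [apply: cvgM; [exact: cvg_cst | exact: cvg_id] | exact: cvg_cst].
Qed.

Lemma contX_le_endpoints f p q k : contX f -> 0 <= p -> p < q -> q <= 1 ->
  (forall y, p < y < q -> f y <= k) -> f p <= k /\ f q <= k.
Proof.
move=> cf p0 pq q1 H; have qp : 0 < q - p by lra.
split; rewrite leNgt; apply/negP => kf.
- have [d d0 Hd] := cf p ltac:(lra) (f p - k) ltac:(lra).
  have [m [m0 md mq]] := exists_pos_le2 d0 qp.
  have := Hd (p + m / 2) ltac:(lra) ltac:(rewrite addrC addKr ger0_norm; lra).
  by rewrite ltr_norml => /andP[h1 _]; have := H (p + m / 2) ltac:(lra); lra.
- have [d d0 Hd] := cf q ltac:(lra) (f q - k) ltac:(lra).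
  have [m [m0 md mq]] := exists_pos_le2 d0 qp.
  have := Hd (q - m / 2) ltac:(lra) ltac:(rewrite addrC addKr normrN ger0_norm; lra).
  by rewrite ltr_norml => /andP[h1 _]; have := H (q - m / 2) ltac:(lra); lra.
Qed.

Lemma exists_last_nonpos f lo hi : contX f -> 0 <= lo -> lo <= hi -> hi <= 1 -> f lo <= 0 ->
  exists s, [/\ lo <= s, s <= hi, f s <= 0 & forall x, s < x <= hi -> 0 < f x].
Proof.
move=> cf l0 lh h1 fl.
pose E := [set x | lo <= x <= hi /\ f x <= 0].
have E0 : E lo by split => //; lra.
have Eub : ubound E hi by move=> x [/andP[]].
have hs : has_sup E by split; [exists lo | exists hi].
have ls : lo <= sup E by apply: sup_upper_bound.
have sh : sup E <= hi by apply: ge_sup => //; exists lo.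
exists (sup E); split => //.
- rewrite leNgt; apply/negP => fs.
  have [d d0 Hd] := cf (sup E) ltac:(lra) (f (sup E)) fs.
  have [e [Ee1 Ee2] se] := sup_adherent d0 hs.
  have es : e <= sup E by apply: sup_upper_bound.
  have he : `|e - sup E| < d by rewrite ltr_norml; apply/andP; split; lra.
  by have := Hd e ltac:(lra) he; rewrite ltr_norml => /andP[]; lra.
- move=> x /andP[sx xh]; rewrite ltNge; apply/negP => fx.
  suff : x <= sup E by lra.
  by apply: sup_upper_bound => //; split => //; lra.
Qed.

Lemma exists_first_nonpos f lo hi : contX f -> 0 <= lo -> lo <= hi -> hi <= 1 -> f hi <= 0 ->
  exists s, [/\ lo <= s, s <= hi, f s <= 0 & forall x, lo <= x < s -> 0 < f x].
Proof.
move=> cf l0 lh h1 fh.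
pose E := [set x | lo <= x <= hi /\ f x <= 0].
have E0 : E hi by split => //; lra.
have Elb : lbound E lo by move=> x [/andP[]].
have hs : has_lbound E by exists lo.
have ls : lo <= inf E by apply: lb_le_inf => //; exists hi.
have sh : inf E <= hi by apply: ge_inf.
exists (inf E); split => //.
- rewrite leNgt; apply/negP => fs.
  have [d d0 Hd] := cf (inf E) ltac:(lra) (f (inf E)) fs.
  have [e [Ee1 Ee2] se] := inf_adherent d0 (conj (ex_intro _ hi E0) hs).
  have es : inf E <= e by apply: ge_inf.
  have he : `|e - inf E| < d by rewrite ltr_norml; apply/andP; split; lra.
  by have := Hd e ltac:(lra) he; rewrite ltr_norml => /andP[]; lra.
- move=> x /andP[lx xs]; rewrite ltNge; apply/negP => fx.
  suff : inf E <= x by lra.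
  by apply: ge_inf => //; split => //; lra.
Qed.

Lemma contX_within_subinterval f lo hi : contX f -> 0 <= lo -> hi <= 1 ->
  {within `[lo, hi], continuous f}.
Proof.
move=> /contXP cf l0 h1; apply: continuous_subspaceW cf => x /=.
by rewrite /X /= !in_itv /= => /andP[]; lra.
Qed.

Definition clamp a b x := Num.max a (Num.min x b).

Lemma clamp_in a b x : a <= b -> a <= clamp a b x <= b.
Proof. by rewrite /clamp => ab; case: (leP x b); case: (leP a x); case: (leP a b); lra. Qed.

Lemma clamp_dist a b x y : `|clamp a b y - clamp a b x| <= `|y - x|.
Proof.
have [h1 h2] : y - x <= `|y - x| /\ x - y <= `|y - x| by rewrite distrC !ler_norm distrC ler_norm.
by rewrite ler_norml /clamp; case: (leP x b); case: (leP y b); case: (leP a x); case: (leP a y);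
  case: (leP a b); lra.
Qed.

Lemma contX_clamp f a b : 0 <= a -> a <= b -> b <= 1 -> contX f ->
  contX (fun x => f (clamp a b x)).
Proof.
move=> a0 ab b1 cf x x01 e e0.
have cx := clamp_in x ab.
have [d d0 Hd] := cf (clamp a b x) ltac:(lra) e e0.
exists d => // y y01 yx; have cy := clamp_in y ab.
by apply: Hd; [lra | exact: le_lt_trans (clamp_dist a b x y) yx].
Qed.

Lemma convex_upper_lipschitz f x : convex_on_X f -> 0 <= x <= 1 ->
  exists2 k, 0 <= k & forall y, 0 <= y <= 1 -> f y - f x <= k * `|y - x|.
Proof.
move=> cf /andP[x0 x1].
set c1 := chord f x 1; set c2 := chord f 0 x.
have [n1 n2] := (normr_ge0 c1, normr_ge0 c2).
exists (`|c1| + `|c2|) => [|y /andP[y0 y1]]; first by rewrite addr_ge0.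
have [yx|xy|->] := ltgtP y x; last by rewrite !subrr normr0 mulr0.
- have hb := @convex_le_chord R f 0 x y cf (lexx 0) ltac:(lra) x1 ltac:(lra).
  have hx : f x = f 0 + c2 * (x - 0) by rewrite chord_mulK ?lt_eqF //; [ring | lra].
  rewrite (ler0_norm (x := y - x)); last lra.
  have [hc hc'] : c2 <= `|c2| /\ - c2 <= `|c2| by split; [exact: ler_norm | rewrite -normrN ler_norm].
  by rewrite -/c2 in hb; nra.
- have hb := @convex_le_chord R f x 1 y cf x0 ltac:(lra) (lexx 1) ltac:(lra).
  rewrite (ger0_norm (x := y - x)); last lra.
  have hc : c1 <= `|c1| := ler_norm _.
  by rewrite -/c1 in hb; nra.
Qed.

(* A convex function squeezed above a continuous function that it touches at the
   endpoints is continuous: lower bounds come from supporting lines in the interior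
   and from the minorant at 0 and 1, upper bounds from convexity. *)
Lemma convex_contX f l : convex_on_X f -> contX l ->
  (forall x, 0 <= x <= 1 -> l x <= f x) -> f 0 = l 0 -> f 1 = l 1 -> contX f.
Proof.
move=> cf cl lf f0 f1 x x01 e e0.
suff [d1 d10 H1] : exists2 d, 0 < d &
    forall y, 0 <= y <= 1 -> `|y - x| < d -> - e < f y - f x.
  have [k k0 Hk] := convex_upper_lipschitz cf x01.
  have ek : 0 < e / (k + 1) by rewrite divr_gt0 //; lra.
  have [m [m0 m1 m2]] := exists_pos_le2 d10 ek.
  exists m => // y y01 yx.
  have ee : e / (k + 1) * (k + 1) = e by rewrite mulfVK //; lra.
  have := Hk y y01; have := H1 y y01 ltac:(lra); have := normr_ge0 (y - x).
  by rewrite ltr_norml => *; apply/andP; split; nra.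
have [->|xne0] := eqVneq x 0.
  have [d d0 Hd] := cl 0 ltac:(lra) e e0.
  exists d => // y y01 yx; have := Hd y y01 yx; rewrite ltr_norml => /andP[h _].
  by have := lf y y01; lra.
have [->|xne1] := eqVneq x 1.
  have [d d0 Hd] := cl 1 ltac:(lra) e e0.
  exists d => // y y01 yx; have := Hd y y01 yx; rewrite ltr_norml => /andP[h _].
  by have := lf y y01; lra.
have x01' : 0 < x < 1 by rewrite !lt_neqAle eq_sym xne0 xne1 /=.
have [s Hs] := exists_support_line cf x01'.
have c0 : 0 < `|s| + 1 by rewrite ltr_pwDr ?normr_ge0.
exists (e / (`|s| + 1)) => [|y y01 yx]; first by rewrite divr_gt0.
have ee : e / (`|s| + 1) * (`|s| + 1) = e by rewrite mulfVK //; lra.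
have := Hs y y01; have := normr_ge0 s; have := normr_ge0 (y - x).
have : - (`|s| * `|y - x|) <= s * (y - x).
  by rewrite -normrM; have := ler_norm (- (s * (y - x))); rewrite normrN; lra.
nra.
Qed.

Lemma cvxK_slopes_in slo shi f : contX f -> supported_in slo shi f ->
  cvxK f /\ slopes_in f slo shi.
Proof.
move=> cf sf; split; last exact: supported_slopes sf.
by split; [exact/contXP | exact: supported_convex sf].
Qed.

End ContinuityOnX.

Section OneSidedDerivatives.
Variable R : realType.
Implicit Types (f : R -> R) (a b k : R).

(* The hypothesis bounds the monotone difference quotients below, so the limit
   defining [dright] exists and is their infimum. *)
Lemma dright_greatest_support f a k0 : convex_on_X f -> 0 <= a -> a < 1 ->
  (forall y, a < y <= 1 -> f a + k0 * (y - a) <= f y) ->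
  support_line f a (dright f a) /\
  (forall k, (forall y, a < y <= 1 -> f a + k * (y - a) <= f y) -> k <= dright f a).
Proof.
move=> cf a0 a1 Hk0.
pose q h := (f (a + h) - f a) / h.
have qE h : q h = chord f a (a + h) by rewrite /q /chord; congr (_ / _); ring.
pose Q := q @` [set` Interval (BRight 0) (BLeft (1 - a))].
have inI h : [set` Interval (BRight 0) (BLeft (1 - a))] h <-> 0 < h < 1 - a.
  by rewrite /= in_itv.
have Qlb : lbound Q k0.
  by move=> _ [h /inI hh <-]; rewrite qE -line_le_chordE; [apply: Hk0|]; lra.
have Q0 : Q !=set0 by exists (q ((1 - a) / 2)); exists ((1 - a) / 2) => //; apply/inI; lra.
have : q x @[x --> 0^'+] --> inf Q.
  apply: nondecreasing_at_right_cvgr; [by rewrite bnd_simp; lra| |by exists k0].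
  move=> h1 h2; rewrite !in_itv /= => /andP[h10 h11] /andP[h20 h21] h12.
  rewrite !qE; case: (ltgtP h1 h2) h12 => // [h12 _|-> //].
  by apply: chord_le_chordr => //; lra.
move=> /cvg_lim dE; rewrite /dright dE //; split.
- move=> y y01; have [ya|ay|->] := ltgtP y a; last by rewrite subrr mulr0 addr0.
  + rewrite chord_le_lineE //; apply: lb_le_inf => // _ [h /inI hh <-].
    by rewrite qE; apply: chord_le_chord_next => //; lra.
  + rewrite line_le_chordE //.
    have hQ : Q (q ((y - a) / 2)) by exists ((y - a) / 2) => //; apply/inI; lra.
    apply: (le_trans (ge_inf (ex_intro _ k0 Qlb) hQ)).
    by rewrite qE; apply: chord_le_chordr => //; lra.
- move=> k Hk; apply: lb_le_inf => // _ [h /inI hh <-].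
  by rewrite qE -line_le_chordE; [apply: Hk|]; lra.
Qed.

Lemma dleft_least_support f b k1 : convex_on_X f -> 0 < b -> b <= 1 ->
  (forall x, 0 <= x < b -> f b + k1 * (x - b) <= f x) ->
  support_line f b (dleft f b) /\
  (forall k, (forall x, 0 <= x < b -> f b + k * (x - b) <= f x) -> dleft f b <= k).
Proof.
move=> cf b0 b1 Hk1.
pose q h := (f b - f (b - h)) / h.
have qE h : q h = chord f (b - h) b by rewrite /q /chord; congr (_ / _); ring.
pose Q := q @` [set` Interval (BRight 0) (BLeft b)].
have inI h : [set` Interval (BRight 0) (BLeft b)] h <-> 0 < h < b by rewrite /= in_itv.
have Qub : ubound Q k1.
  by move=> _ [h /inI hh <-]; rewrite qE -chord_le_lineE; [apply: Hk1|]; lra.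
have Q0 : Q !=set0 by exists (q (b / 2)); exists (b / 2) => //; apply/inI; lra.
have hsQ : has_sup Q by split => //; exists k1.
have : q x @[x --> 0^'+] --> sup Q.
  apply: nonincreasing_at_right_cvgr; [by rewrite bnd_simp| |by exists k1].
  move=> h1 h2; rewrite !in_itv /= => /andP[h10 h11] /andP[h20 h21] h12.
  rewrite !qE; case: (ltgtP h1 h2) h12 => // [h12 _|-> //].
  by apply: chord_le_chordl => //; lra.
move=> /cvg_lim dE; rewrite /dleft dE //; split.
- move=> y y01; have [yb|by_|->] := ltgtP y b; last by rewrite subrr mulr0 addr0.
  + rewrite chord_le_lineE //.
    have hQ : Q (q ((b - y) / 2)) by exists ((b - y) / 2) => //; apply/inI; lra.
    apply: (le_trans _ (sup_upper_bound hsQ hQ)).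
    by rewrite qE; apply: chord_le_chordl => //; lra.
  + rewrite line_le_chordE //; apply: ge_sup => // _ [h /inI hh <-].
    by rewrite qE; apply: chord_le_chord_next => //; lra.
- move=> k Hk; apply: ge_sup => // _ [h /inI hh <-].
  by rewrite qE -chord_le_lineE; [apply: Hk|]; lra.
Qed.

Lemma dright_affine f a e m c : convex_on_X f -> 0 <= a -> 0 < e -> a + e <= 1 ->
  (forall x, a <= x <= a + e -> f x = m * x + c) -> dright f a = m.
Proof.
move=> cf a0 e0 ae1 fE.
have [fa fae] : f a = m * a + c /\ f (a + e) = m * (a + e) + c by split; apply: fE; lra.
have chE : chord f a (a + e) = m by rewrite /chord fa fae; field; lra.
have Hm y : a < y <= 1 -> f a + m * (y - a) <= f y.
  move=> yI; case: (leP y (a + e)) => ye; first by rewrite fa fE; lra.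
  by rewrite -chE; apply: chord_le_convex => //; lra.
have a1 : a < 1 by lra.
have [Hs Hmax] := dright_greatest_support cf a0 a1 Hm.
apply/eqP; rewrite eq_le Hmax // andbT.
have := Hs (a + e) ltac:(lra); rewrite fa fae => h.
have : (dright f a - m) * e <= 0 by lra.
by rewrite pmulr_lle0; lra.
Qed.

Lemma dleft_affine f b e m c : convex_on_X f -> 0 <= b - e -> 0 < e -> b <= 1 ->
  (forall x, b - e <= x <= b -> f x = m * x + c) -> dleft f b = m.
Proof.
move=> cf be e0 b1 fE.
have [fb fbe] : f b = m * b + c /\ f (b - e) = m * (b - e) + c by split; apply: fE; lra.
have chE : chord f (b - e) b = m by rewrite /chord fb fbe; field; lra.
have Hm x : 0 <= x < b -> f b + m * (x - b) <= f x.
  move=> xI; case: (leP (b - e) x) => ex; first by rewrite fb fE; lra.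
  have [bb x01 xo] : [/\ b - e < b, 0 <= x <= 1 & (x <= b - e) || (b <= x)].
    by split; rewrite ?(ltW ex) //; lra.
  by have := chord_le_convex cf be bb b1 x01 xo; rewrite chE fbe fb; lra.
have b0 : 0 < b by lra.
have [Hs Hmin] := dleft_least_support cf b0 b1 Hm.
apply/eqP; rewrite eq_le Hmin //=.
have := Hs (b - e) ltac:(lra); rewrite fb fbe => h.
have : (m - dleft f b) * e <= 0 by lra.
by rewrite pmulr_lle0; lra.
Qed.

End OneSidedDerivatives.

Section ConvexEnvelope.
Variable R : realType.
Implicit Types (f g h phi : R -> R) (p q x : R).

Definition convex_minorant g phi :=
  convex_on_X g /\ forall y, 0 <= y <= 1 -> g y <= phi y.

Let has_sup_vex g phi x : convex_minorant g phi -> 0 <= x <= 1 ->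
  has_sup [set h x | h in [set h : R -> R | convex_on_X h /\
    forall y, y \in @X R -> h y <= phi y]].
Proof.
case=> cg lg x01; split; first by exists (g x), g => //; split => // y; rewrite in_X; exact: lg.
by exists (phi x) => _ [h [_ hh] <-]; apply: hh; rewrite in_X.
Qed.

Lemma vex_ge g phi x : convex_minorant g phi -> 0 <= x <= 1 -> g x <= vex phi x.
Proof.
move=> /[dup] gphi [cg lg] x01; apply: sup_upper_bound; first exact: has_sup_vex gphi x01.
by exists g => //; split => // y; rewrite in_X; exact: lg.
Qed.

Lemma vex_le g phi x : convex_minorant g phi -> 0 <= x <= 1 -> vex phi x <= phi x.
Proof.
move=> gphi x01; apply: ge_sup; first by case: (has_sup_vex gphi x01).
by move=> _ [h [_ hh] <-]; apply: hh; rewrite in_X.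
Qed.

Lemma vex_convex g phi : convex_minorant g phi -> convex_on_X (vex phi).
Proof.
move=> gphi x y t xX yX /[dup] t01 /andP[t0 t1].
have z01 : 0 <= t * x + (1 - t) * y <= 1.
  by move: xX yX; rewrite !in_X => /andP[? ?] /andP[? ?]; apply/andP; split; nra.
apply: ge_sup; first by case: (has_sup_vex gphi z01).
move=> _ [h [ch hh] <-].
have hphi : convex_minorant h phi by split => // w w01; apply: hh; rewrite in_X.
apply: (le_trans (ch x y t xX yX t01)).
by apply: lerD; apply: ler_wpM2l; rewrite ?(vex_ge hphi) -?in_X //; lra.
Qed.

Lemma vex_minorant g phi : convex_minorant g phi -> convex_minorant (vex phi) phi.
Proof. by move=> gphi; split => [|x]; [exact: vex_convex gphi | exact: vex_le gphi]. Qed.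

Lemma vex_eq_at g phi x : convex_minorant g phi -> 0 <= x <= 1 -> phi x = g x ->
  vex phi x = g x.
Proof. by move=> gphi x01 e; apply/eqP; rewrite eq_le (vex_ge gphi) // andbT -e (vex_le gphi). Qed.

Lemma vex_eq_greatest g phi : convex_minorant g phi ->
  (forall h, convex_minorant h phi -> forall x, 0 <= x <= 1 -> h x <= g x) ->
  forall x, 0 <= x <= 1 -> vex phi x = g x.
Proof.
move=> gphi H x x01; apply/eqP.
by rewrite eq_le (vex_ge gphi) // andbT H //; exact: vex_minorant gphi.
Qed.

Lemma contX_small_near_ends d p z q c : contX d -> 0 <= p -> p < z < q -> q <= 1 ->
  d p = 0 -> d q = 0 -> 0 < c ->
  exists p1 q1, [/\ p < p1 <= z, z <= q1 < q &
    forall y, p <= y <= q -> (y < p1) || (q1 < y) -> d y < c].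
Proof.
move=> cd p0 /andP[pz zq] q1 dp dq c0.
have [d1 d10 H1] := cd p ltac:(lra) c c0.
have [d2 d20 H2] := cd q ltac:(lra) c c0.
have [zp qz] : 0 < z - p /\ 0 < q - z by split; lra.
have [m1 [m10 m1a m1b]] := exists_pos_le2 d10 zp.
have [m2 [m20 m2a m2b]] := exists_pos_le2 d20 qz.
exists (p + m1), (q - m2); split; [lra | lra |] => y /andP[py yq] /orP[yp|yq'].
- have := H1 y ltac:(lra) ltac:(rewrite ger0_norm; lra).
  by rewrite dp subr0 ltr_norml => /andP[].
- have := H2 y ltac:(lra) ltac:(rewrite ler0_norm; lra).
  by rewrite dq subr0 ltr_norml => /andP[].
Qed.

Lemma contX_pos_bounded_below d p q : contX d -> 0 <= p -> p <= q -> q <= 1 ->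
  (forall y, p <= y <= q -> 0 < d y) ->
  exists2 eta, 0 < eta & forall y, p <= y <= q -> eta <= d y.
Proof.
move=> cd p0 pq q1 dpos.
have [y0 y0I y0M] := EVT_min pq (contX_within_subinterval cd p0 q1).
move: y0I; rewrite in_itv /= => y0I.
by exists (d y0) => [|y yI]; [exact: dpos | apply: y0M; rewrite in_itv].
Qed.

Lemma convex_minorant_max_line g phi m c : convex_minorant g phi ->
  (forall y, 0 <= y <= 1 -> g y < m * y + c -> m * y + c <= phi y) ->
  convex_minorant (fun y => Num.max (g y) (m * y + c)) phi.
Proof.
move=> [cg gphi] H; split; first exact/convex_max/convex_affine.
move=> y y01; rewrite ge_max gphi //=.
by case: (ltP (g y) (m * y + c)) => [/(H y y01)|] //; have := gphi y y01; lra.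
Qed.

(* The envelope is affine on any gap of its contact set: otherwise the maximum of
   V and a slightly lowered chord would be a larger convex minorant. *)
Lemma vex_affine_on_gap g phi p q : convex_minorant g phi -> contX phi -> contX (vex phi) ->
  0 <= p -> p < q -> q <= 1 -> (forall x, p < x < q -> vex phi x < phi x) ->
  forall x, p <= x <= q -> vex phi x = vex phi p + chord (vex phi) p q * (x - p).
Proof.
move=> gphi cphi cV p0 pq q1 gap.
have [cvxV Vphi] := vex_minorant gphi.
set V := vex phi in cV gap cvxV Vphi *; set c := chord V p q.
pose L x := V p + c * (x - p).
pose D x := L x - V x.
have DyE y : D y = L y - V y by [].
have cD : contX D.
  apply: contXB => //; apply: (eq_contX (f := fun x => c * x + (V p - c * p))) => [x _|].
    by rewrite /L; ring.
  exact: contX_affine.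
move=> x hx; apply/eqP; rewrite eq_le convex_le_chord //= leNgt; apply/negP => Vx.
have [xs xsI xsM] := EVT_max (ltW pq) (contX_within_subinterval cD p0 q1).
move: xsI; rewrite in_itv /= => xsI.
have Dxs : 0 < D xs by apply: lt_le_trans (_ : 0 < D x) (xsM _ _); rewrite ?subr_gt0 ?in_itv.
have [Dp Dq] : D p = 0 /\ D q = 0 by rewrite /D /L chord_mulK ?lt_eqF //; split; ring.
have xs_in : p < xs < q.
  case/andP: xsI => pxs xsq; rewrite !lt_neqAle pxs xsq !andbT.
  by apply/andP; split; apply/eqP => E; move: Dxs; [rewrite -E Dp | rewrite E Dq]; rewrite ltxx.
have Dxs2 : 0 < D xs / 2 by lra.
have [p1 [q1' [/andP[pp1 p1xs] /andP[xsq1 q1q] Dsmall]]] :=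
  contX_small_near_ends cD p0 xs_in q1 Dp Dq Dxs2.
have [eta eta0 etaP] : exists2 eta, 0 < eta & forall y, p1 <= y <= q1' -> eta <= phi y - V y.
  apply: contX_pos_bounded_below; [exact: contXB | lra | lra | lra |].
  by move=> y yI; rewrite subr_gt0; apply: gap; lra.
have [dl [dl0 dla dlb]] := exists_pos_le2 Dxs2 eta0.
have LE y : L y - D xs + dl = c * y + (V p - c * p - D xs + dl) by rewrite /L; ring.
have hphi := convex_minorant_max_line (m := c) (c := V p - c * p - D xs + dl)
  (vex_minorant gphi).
have /hphi{}hphi : forall y, 0 <= y <= 1 -> V y < c * y + (V p - c * p - D xs + dl) ->
    c * y + (V p - c * p - D xs + dl) <= phi y.
  move=> y y01; rewrite -LE => Vy.
  have [yin|yout] := boolP ((p <= y) && (y <= q)); last first.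
    have yo : (y <= p) || (q <= y).
      by move: yout; rewrite negb_and -!ltNge => /orP[] ?; apply/orP; [left|right]; lra.
    by have := chord_le_convex cvxV p0 pq q1 y01 yo; rewrite -/c -/(L y); lra.
  have [ys|ys] := boolP ((y < p1) || (q1' < y)).
    by have := Dsmall y yin ys; rewrite (DyE y); lra.
  have := etaP y ltac:(by move: ys; rewrite negb_or -!leNgt => /andP[-> ->]).
  by have := xsM y ltac:(by rewrite in_itv); rewrite (DyE y); lra.
have xs01 : 0 <= xs <= 1 by lra.
by have := vex_ge hphi xs01; rewrite -/V ge_max -LE (DyE xs) => /andP[_ ?]; lra.
Qed.

Lemma vex_eq_of_affine_gap g phi p q m c : convex_minorant g phi ->
  0 <= p -> p <= q -> q <= 1 ->
  (forall x, 0 <= x <= 1 -> (x <= p) || (q <= x) -> phi x = g x) ->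
  (forall x, p < x < q -> g x = m * x + c) -> g p <= m * p + c -> g q <= m * q + c ->
  forall x, 0 <= x <= 1 -> vex phi x = g x.
Proof.
move=> gphi p0 pq q1 out gE gp gq; apply: vex_eq_greatest => // h [ch hphi] x x01.
have hout y : 0 <= y <= 1 -> (y <= p) || (q <= y) -> h y <= g y.
  by move=> y01 yo; rewrite -out //; exact: hphi.
case: (boolP ((x <= p) || (q <= x))) => [|/norP[]]; first exact: hout.
rewrite -!ltNge => px xq; rewrite gE ?px //.
apply: (convex_le_line ch p0 (ltW px) (ltW xq) q1).
  by apply: le_trans gp; apply: hout; rewrite ?lexx //; lra.
by apply: le_trans gq; apply: hout; rewrite ?lexx ?orbT //; lra.
Qed.

End ConvexEnvelope.

Section SlopeBounds.
Variables (R : realType) (slo shi : R) (u : R -> R).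
Hypotheses (cu : convex_on_X u) (contu : contX u) (su : slopes_in u slo shi).

Lemma slo_line_le x y : 0 <= x -> x < y -> y <= 1 -> u x + slo * (y - x) <= u y.
Proof.
move=> x0 xy y1.
have inner x' : 0 < x' < y -> u x' + slo * (y - x') <= u y.
  move=> x'I; have x'1 : 0 < x' < 1 by lra.
  have [s /andP[s1 _] hs] := convex_supported cu su x'1.
  by have := hs y ltac:(lra); nra.
have [->|xn0] := eqVneq x 0; last by apply: inner; rewrite lt_neqAle eq_sym xn0 x0.
have cf := contXD contu (contX_affine (- slo) (slo * y - u y)).
have y0 : 0 < y by lra.
have [] := contX_le_endpoints (k := 0) cf (lexx 0) y0 y1; last by lra.
by move=> x' /inner; lra.
Qed.

Lemma shi_line_le x y : 0 <= x -> x < y -> y <= 1 -> u y + shi * (x - y) <= u x.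
Proof.
move=> x0 xy y1.
have inner y' : x < y' < 1 -> u y' + shi * (x - y') <= u x.
  move=> y'I; have y'1 : 0 < y' < 1 by lra.
  have [s /andP[_ s2] hs] := convex_supported cu su y'1.
  by have := hs x ltac:(lra); nra.
have [->|yn1] := eqVneq y 1; last by apply: inner; rewrite xy lt_neqAle yn1 y1.
have cf := contXD contu (contX_affine (- shi) (shi * x - u x)).
have x1 : x < 1 by lra.
have [] := contX_le_endpoints (k := 0) cf x0 x1 (lexx 1); last by lra.
by move=> y' /inner; lra.
Qed.

End SlopeBounds.

Section MaxOfLines.
Variable R : realType.
Implicit Types (l : R * R) (m c a b x : R).

Definition line l x := l.1 * x + l.2.

Definition max3 l0 l1 l2 x := Num.max (line l0 x) (Num.max (line l1 x) (line l2 x)).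

Lemma affine_sign_near_right m c a : exists2 e, 0 < e &
  (forall x, a <= x <= a + e -> m * x + c <= 0) \/
  (forall x, a <= x <= a + e -> 0 <= m * x + c).
Proof.
have Ex x : m * x + c = (m * a + c) + m * (x - a) by ring.
have [m0|m0] := leP m 0.
  have [v0|v0] := leP (m * a + c) 0; first by exists 1 => //; left => x /andP[ax _]; rewrite Ex; nra.
  exists ((m * a + c) / (1 - m)); first by rewrite divr_gt0 //; lra.
  right => x /andP[ax xe]; rewrite Ex.
  have ee : (m * a + c) / (1 - m) * (1 - m) = m * a + c by rewrite mulfVK //; lra.
  by nra.
have [v0|v0] := ltP (m * a + c) 0; last by exists 1 => //; right => x /andP[ax _]; rewrite Ex; nra.
exists (- (m * a + c) / (1 + m)); first by rewrite divr_gt0 //; lra.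
left => x /andP[ax xe]; rewrite Ex.
have ee : - (m * a + c) / (1 + m) * (1 + m) = - (m * a + c) by rewrite mulfVK //; lra.
by nra.
Qed.

Lemma max2_near_right l1 l2 a : exists2 e, 0 < e & exists2 l, l \in [:: l1; l2] &
  forall x, a <= x <= a + e -> Num.max (line l1 x) (line l2 x) = line l x.
Proof.
have [e e0 H] := affine_sign_near_right (l1.1 - l2.1) (l1.2 - l2.2) a.
exists e => //; case: H => H; [exists l2; rewrite ?inE ?eqxx ?orbT //|exists l1; rewrite ?inE ?eqxx //];
  move=> x /H; rewrite /line; [move=> h; apply/max_idPr | move=> h; apply/max_idPl]; lra.
Qed.

Lemma max3_near_right l0 l1 l2 a : exists2 e, 0 < e & exists2 l, l \in [:: l0; l1; l2] &
  forall x, a <= x <= a + e -> max3 l0 l1 l2 x = line l x.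
Proof.
have [e1 e10 [l l12 H1]] := max2_near_right l1 l2 a.
have [e2 e20 [l' l0l H2]] := max2_near_right l0 l a.
have [e [e0 ee1 ee2]] := exists_pos_le2 e10 e20.
exists e => //; exists l'.
  by move: l12 l0l; rewrite !inE => /orP[]/eqP-> /orP[]/eqP->; rewrite eqxx ?orbT.
by move=> x xI; rewrite /max3 H1 ?H2 //; lra.
Qed.

Lemma max3_near_left l0 l1 l2 b : exists2 e, 0 < e & exists2 l, l \in [:: l0; l1; l2] &
  forall x, b - e <= x <= b -> max3 l0 l1 l2 x = line l x.
Proof.
pose r l := (- l.1, l.2).
have rE l x : line (r l) (- x) = line l x by rewrite /line /= mulrNN.
have [e e0 [l lI H]] := max3_near_right (r l0) (r l1) (r l2) (- b).
exists e => //; exists (r l).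
  by move: lI; rewrite !inE => /or3P[]/eqP->; rewrite /r /= !opprK -!surjective_pairing eqxx ?orbT.
by move=> x xI; have := H (- x) ltac:(lra); rewrite /max3 !rE => ->; rewrite /line /=; ring.
Qed.

Lemma max3_other l0 l1 l2 lc lj : lc \in [:: l0; l1; l2] -> lj \in [:: l0; l1; l2] ->
  lc != lj -> exists2 lk, lk \in [:: l0; l1; l2] & forall x,
    line lc x < max3 l0 l1 l2 x -> line lj x < max3 l0 l1 l2 x -> max3 l0 l1 l2 x = line lk x.
Proof.
rewrite !inE /max3 => /or3P[]/eqP-> /or3P[]/eqP->; rewrite ?eqxx // => _;
  [exists l2|exists l1|exists l2|exists l0|exists l1|exists l0];
  rewrite ?inE ?eqxx ?orbT // => x; rewrite !maxEle; do ![case: ifP => ?]; lra.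
Qed.

Lemma max3E l0 l1 l2 x v : line l0 x <= v -> line l1 x <= v -> line l2 x <= v ->
  [\/ line l0 x = v, line l1 x = v | line l2 x = v] -> max3 l0 l1 l2 x = v.
Proof.
move=> h0 h1 h2 E; apply/eqP; rewrite eq_le /max3 !ge_max h0 h1 h2 /= !le_max.
by case: E => ->; rewrite lexx ?orbT.
Qed.

End MaxOfLines.

Definition admissible_direction (R : realType) (slo shi : R) (u h : R -> R) :=
  forall eps : R, 0 <= eps <= 1 ->
    (cvxK (fun x => u x + eps * h x) /\ slopes_in (fun x => u x + eps * h x) slo shi) /\
    (cvxK (fun x => u x - eps * h x) /\ slopes_in (fun x => u x - eps * h x) slo shi).

Section Envelope.
Variables (R : realType) (slo shi : R) (u : R -> R) (a b : R).
Hypotheses (cu : convex_on_X u) (contu : contX u) (su : slopes_in u slo shi).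
Hypotheses (a0 : 0 <= a) (ab : a < b) (b1 : b <= 1).
Implicit Types (x y z w s : R).

(* [lra] does not use section hypotheses, so the bounds on a and b are recalled. *)
Local Ltac ab_bounds := have := a0; have := ab; have := b1; move=> ? ? ?.

Lemma dright_spec : support_line u a (dright u a) /\
  (forall k, (forall y, a < y <= 1 -> u a + k * (y - a) <= u y) -> k <= dright u a).
Proof.
ab_bounds; have a1 : a < 1 by lra.
apply: (dright_greatest_support (k0 := slo)) => // y yI.
by apply: (slo_line_le cu contu su); lra.
Qed.

Lemma dleft_spec : support_line u b (dleft u b) /\
  (forall k, (forall x, 0 <= x < b -> u b + k * (x - b) <= u x) -> dleft u b <= k).
Proof.
ab_bounds; have b0 : 0 < b by lra.
apply: (dleft_least_support (k1 := shi)) => // x xI.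
by apply: (shi_line_le cu contu su); lra.
Qed.

Lemma tan_right_le y : 0 <= y <= 1 -> tan_right u a y <= u y.
Proof. exact: dright_spec.1. Qed.

Lemma tan_left_le y : 0 <= y <= 1 -> tan_left u b y <= u y.
Proof. exact: dleft_spec.1. Qed.

Lemma dright_slopes : slo <= dright u a <= shi.
Proof.
ab_bounds; case: dright_spec => H1 H2; apply/andP; split.
  by apply: H2 => y yI; apply: (slo_line_le cu contu su); lra.
have := H1 b ltac:(lra); have := shi_line_le cu contu su a0 ab b1 => h1 h2.
have : (dright u a - shi) * (b - a) <= 0 by nra.
by rewrite pmulr_lle0; lra.
Qed.

Lemma dleft_slopes : slo <= dleft u b <= shi.
Proof.
ab_bounds; case: dleft_spec => H1 H2; apply/andP; split; last first.
  by apply: H2 => x xI; apply: (shi_line_le cu contu su); lra.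
have := H1 a ltac:(lra); have := slo_line_le cu contu su a0 ab b1 => h1 h2.
have : (slo - dleft u b) * (b - a) <= 0 by nra.
by rewrite pmulr_lle0; lra.
Qed.

Lemma support_le_dright z s : 0 <= z -> z < a -> support_line u z s -> s <= dright u a.
Proof.
ab_bounds => z0 za hs; have := hs a ltac:(lra); have := @tan_right_le z ltac:(lra).
rewrite /tan_right => h1 h2; have : (s - dright u a) * (a - z) <= 0 by nra.
by rewrite pmulr_lle0; lra.
Qed.

Lemma dleft_le_support z s : b < z -> z <= 1 -> support_line u z s -> dleft u b <= s.
Proof.
ab_bounds => bz z1 hs; have := hs b ltac:(lra); have := @tan_left_le z ltac:(lra).
rewrite /tan_left => h1 h2; have : (dleft u b - s) * (z - b) <= 0 by nra.
by rewrite pmulr_lle0; lra.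
Qed.

Definition tan_max x := Num.max (tan_right u a x) (tan_left u b x).

Lemma tan_max_le x : 0 <= x <= 1 -> tan_max x <= u x.
Proof. by move=> x01; rewrite /tan_max ge_max tan_right_le // tan_left_le. Qed.

Lemma tan_max_a : tan_max a = u a.
Proof.
ab_bounds; have := @tan_left_le a ltac:(lra).
by rewrite /tan_max /tan_right subrr mulr0 addr0 => /max_idPl.
Qed.

Lemma tan_max_b : tan_max b = u b.
Proof.
ab_bounds; have := @tan_right_le b ltac:(lra).
by rewrite /tan_max /tan_left subrr mulr0 addr0 => /max_idPr.
Qed.

Lemma contX_tan_max : contX tan_max.
Proof.
apply: contX_max.
- apply: (eq_contX (f := fun x => dright u a * x + (u a - dright u a * a))) => [x _|].
    by rewrite /tan_right; ring.
  exact: contX_affine.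
- apply: (eq_contX (f := fun x => dleft u b * x + (u b - dleft u b * b))) => [x _|].
    by rewrite /tan_left; ring.
  exact: contX_affine.
Qed.

Definition phi x := u x + gab u a b x.

Lemma phi_in x : a <= x <= b -> phi x = 2 * u x - tan_max x.
Proof. by move=> xI; rewrite /phi /gab xI /tan_max; ring. Qed.

Lemma gab_clamp x : gab u a b x = u (clamp a b x) - tan_max (clamp a b x).
Proof.
ab_bounds; rewrite /gab /clamp; case: (boolP (a <= x <= b)) => [/andP[ax xb]|xI].
  by rewrite (min_idPl xb) (max_idPr ax).
case: (leP x b) => xb.
  have xa : x < a by move: xI; rewrite xb andbT -ltNge.
  by rewrite (max_idPl (ltW xa)) tan_max_a subrr.
by rewrite (max_idPr (ltW ab)) tan_max_b subrr.
Qed.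

Lemma phi_out x : (x <= a) || (b <= x) -> phi x = u x.
Proof.
ab_bounds => xI; rewrite /phi gab_clamp /clamp; case/orP: xI => [xa|bx].
  by rewrite (min_idPl (le_trans xa (ltW ab))) (max_idPl xa) tan_max_a subrr addr0.
by rewrite (min_idPr bx) (max_idPr (ltW ab)) tan_max_b subrr addr0.
Qed.

Lemma contX_phi : contX phi.
Proof.
apply: (eq_contX (f := fun x => u x + (u (clamp a b x) - tan_max (clamp a b x)))).
  by move=> x _; rewrite /phi gab_clamp.
exact/contXD/(contX_clamp a0 (ltW ab) b1 (contXB contu contX_tan_max)).
Qed.

Lemma u_minorant : convex_minorant u phi.
Proof.
split=> // x x01; case: (boolP ((x <= a) || (b <= x))) => [/phi_out -> //|].
rewrite negb_or -!ltNge => /andP[ax xb]; rewrite phi_in; last lra.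
by have := tan_max_le x01; lra.
Qed.

Lemma phi_le_reflect (l : R -> R) : (forall w, 0 <= w <= 1 -> l w <= u w) ->
  (forall w, a <= w <= b -> l w <= tan_max w) ->
  forall w, 0 <= w <= 1 -> phi w <= 2 * u w - l w.
Proof.
move=> lu lt w w01; case: (boolP ((w <= a) || (b <= w))) => [/phi_out ->|].
  by have := lu w w01; lra.
rewrite negb_or -!ltNge => /andP[aw wb]; rewrite phi_in; last lra.
by have := lt w ltac:(lra); lra.
Qed.

Definition V := vex phi.

Lemma V_minorant : convex_minorant V phi.
Proof. exact: vex_minorant u_minorant. Qed.

Lemma u_le_V x : 0 <= x <= 1 -> u x <= V x.
Proof. exact: vex_ge u_minorant. Qed.

Lemma V_le_phi x : 0 <= x <= 1 -> V x <= phi x.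
Proof. exact: V_minorant.2. Qed.

Lemma V_out x : 0 <= x <= 1 -> (x <= a) || (b <= x) -> V x = u x.
Proof. by move=> x01 /phi_out; apply: vex_eq_at u_minorant x01. Qed.

Lemma contX_V : contX V.
Proof.
apply: (convex_contX V_minorant.1 contu u_le_V); apply: V_out; rewrite ?lexx //; ab_bounds; lra.
Qed.

Lemma supported_V : supported_in slo shi V.
Proof.
move=> z /[dup] zi /andP[z0 z1]; have [s hs] := exists_support_line V_minorant.1 zi.
have uV := @u_le_V z ltac:(lra).
have [V0 V1] : V 0 = u 0 /\ V 1 = u 1.
  by ab_bounds; split; apply: V_out; rewrite ?lexx ?orbT //; lra.
exists s => //; apply/andP; split.
- have := hs 0 ltac:(lra); have := slo_line_le cu contu su (lexx 0) z0 (ltW z1).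
  rewrite V0 => h1 h2; have : (slo - s) * z <= 0 by nra.
  by rewrite pmulr_lle0; lra.
- have := hs 1 ltac:(lra); have := shi_line_le cu contu su (ltW z0) z1 (lexx 1).
  rewrite V1 => h1 h2; have : (s - shi) * (1 - z) <= 0 by nra.
  by rewrite pmulr_lle0; lra.
Qed.

Lemma tangent_at_contact q : a <= q <= b -> exists2 tau, slo <= tau <= shi &
  forall w, 0 <= w <= 1 -> phi w <= 2 * u w - (tan_max q + tau * (w - q)).
Proof.
move=> qI; rewrite {1}/tan_max; case: leP => h.
- exists (dleft u b); first exact: dleft_slopes.
  move=> w w01; have -> : tan_left u b q + dleft u b * (w - q) = tan_left u b w.
    by rewrite /tan_left; ring.
  by apply: phi_le_reflect => // y yI; [exact: tan_left_le | rewrite /tan_max le_max lexx orbT].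
- exists (dright u a); first exact: dright_slopes.
  move=> w w01; have -> : tan_right u a q + dright u a * (w - q) = tan_right u a w.
    by rewrite /tan_right; ring.
  by apply: phi_le_reflect => // y yI; [exact: tan_right_le | rewrite /tan_max le_max lexx].
Qed.

Definition W x := 2 * u x - V x.

Lemma support_W_contact q : a <= q <= b -> V q = phi q -> exists2 tau, slo <= tau <= shi &
  support_line W q tau /\ forall w, 0 <= w <= 1 -> phi w <= 2 * u w - (tan_max q + tau * (w - q)).
Proof.
move=> qI Vq; have [tau ht hl] := tangent_at_contact qI; exists tau => //; split => // w w01.
rewrite /W Vq phi_in //; have := hl w w01; have := V_le_phi w01; lra.
Qed.

(* Left of a, V = u and the supporting line of u at z still reflects above phi. *)
Lemma support_W_left z : 0 < z -> z < a -> exists2 s, slo <= s <= shi & support_line W z s.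
Proof.
ab_bounds => z0 za; have zi : 0 < z < 1 by lra.
have [s hs Hs] := convex_supported cu su zi.
have sda := support_le_dright (ltW z0) za Hs.
exists s => // w w01; rewrite /W (@V_out z) ?(ltW za) //; last lra.
have hl : forall w, 0 <= w <= 1 -> phi w <= 2 * u w - (u z + s * (w - z)).
  apply: phi_le_reflect => [y y01|y yI]; first exact: Hs.
  apply: (le_trans _ (_ : tan_right u a y <= tan_max y)); last by rewrite /tan_max le_max lexx.
  have : 0 <= (dright u a - s) * (y - a) by apply: mulr_ge0; lra.
  by have := Hs a ltac:(lra); rewrite /tan_right; lra.
by have := hl w w01; have := V_le_phi w01; lra.
Qed.

Lemma support_W_right z : b < z -> z < 1 -> exists2 s, slo <= s <= shi & support_line W z s.
Proof.
ab_bounds => bz z1; have zi : 0 < z < 1 by lra.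
have [s hs Hs] := convex_supported cu su zi.
have sdb := dleft_le_support bz (ltW z1) Hs.
exists s => // w w01; rewrite /W (@V_out z) ?(ltW bz) ?orbT //; last lra.
have hl : forall w, 0 <= w <= 1 -> phi w <= 2 * u w - (u z + s * (w - z)).
  apply: phi_le_reflect => [y y01|y yI]; first exact: Hs.
  apply: (le_trans _ (_ : tan_left u b y <= tan_max y)); last by rewrite /tan_max le_max lexx orbT.
  have : 0 <= (s - dleft u b) * (b - y) by apply: mulr_ge0; lra.
  by have := Hs b ltac:(lra); rewrite /tan_left; lra.
by have := hl w w01; have := V_le_phi w01; lra.
Qed.

Lemma contact_gap z : a <= z <= b -> V z < phi z -> exists p q,
  [/\ a <= p, p < z, z < q & q <= b] /\
  [/\ V p = phi p, V q = phi q & forall x, p < x < q -> V x < phi x].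
Proof.
ab_bounds => zI Vz; pose f x := phi x - V x.
have cf : contX f := contXB contX_phi contX_V.
have fa : f a <= 0.
  by rewrite /f phi_out ?lexx // (@V_out a) ?lexx //; lra.
have fb : f b <= 0.
  by rewrite /f phi_out ?lexx ?orbT // (@V_out b) ?lexx ?orbT //; lra.
have [az zb] : a <= z /\ z <= b by lra.
have [p [ap pz fp Hp]] := exists_last_nonpos cf a0 az (le_trans zb b1) fa.
have [q [zq qb fq Hq]] := exists_first_nonpos cf (le_trans a0 az) zb b1 fb.
have [Vp Vq] : V p = phi p /\ V q = phi q.
  by rewrite /f in fp fq; split; apply/eqP; rewrite eq_le V_le_phi /=; lra.
exists p, q; split; split => //; rewrite ?lt_neqAle ?pz ?zq ?andbT.
- by apply/eqP => E; move: fp; rewrite /f E; lra.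
- by apply/eqP => E; move: fq; rewrite /f -E; lra.
- move=> x /andP[px xq]; rewrite -subr_gt0.
  by case: (leP x z) => xz; [apply: Hp | apply: Hq]; lra.
Qed.

(* On a gap (p, q) the envelope is a line of slope c, and the reflected supporting
   line of u at z has slope 2 s - c, squeezed between the slopes at p and q. *)
Lemma support_W_gap z : 0 < z < 1 -> a <= z <= b -> V z < phi z ->
  exists2 s, slo <= s <= shi & support_line W z s.
Proof.
ab_bounds => zi zI Vz.
have [p [q [[ap pz zq qb] [Vp Vq gap]]]] := contact_gap zI Vz.
have [p0 pq q1] : [/\ 0 <= p, p < q & q <= 1] by split; lra.
have Vline := vex_affine_on_gap u_minorant contX_phi contX_V p0 pq q1 gap.
rewrite -/V in Vline; set c := chord V p q in Vline.
have [s _ Hs] := convex_supported cu su zi.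
have [pI qI] : a <= p <= b /\ a <= q <= b by split; lra.
have [tq /andP[_ tq2] [Wq Lq]] := support_W_contact qI Vq.
have [tp /andP[tp1 _] [Wp Lp]] := support_W_contact pI Vp.
have [z01 p01 q01] : [/\ 0 <= z <= 1, 0 <= p <= 1 & 0 <= q <= 1] by split; lra.
have [Vz' Vq'] := (Vline z ltac:(lra), Vline q ltac:(lra)).
have := Lq z z01; have := Lp z z01; have := Hs q q01; have := Hs p p01.
have := V_le_phi z01; rewrite (phi_in pI) in Vp; rewrite (phi_in qI) in Vq => h1 h2 h3 h4 h5.
have tq_ge : 2 * s - c <= tq.
  have : 0 <= (c + tq - 2 * s) * (q - z) by nra.
  by rewrite pmulr_lge0; lra.
have tp_le : tp <= 2 * s - c.
  have : 0 <= (2 * s - c - tp) * (z - p) by nra.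
  by rewrite pmulr_lge0; lra.
exists (2 * s - c); first lra.
apply: (support_line_glue p0 pq q1 _ Wp Wq tp_le tq_ge) => w wI.
by rewrite /W; have := Vline w wI; have := Hs w ltac:(lra); lra.
Qed.

Lemma supported_W : supported_in slo shi W.
Proof.
move=> z /[dup] zi /andP[z0 z1].
have [za|az] := ltP z a; first exact: support_W_left.
have [bz|zb] := ltP b z; first exact: support_W_right.
have zI : a <= z <= b by apply/andP.
have z01 : 0 <= z <= 1 by lra.
have := V_le_phi z01; rewrite le_eqVlt => /orP[/eqP Vz|Vz].
  by have [tau ht [H _]] := support_W_contact zI Vz; exists tau.
exact: support_W_gap.
Qed.

Lemma tan_right_contact : exists p, [/\ a <= p, p <= b,
  (forall x, a <= x <= p -> u x = tan_right u a x) &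
  (forall x, p < x <= b -> tan_right u a x < u x)].
Proof.
ab_bounds; pose f x := u x + (- dright u a * x + (dright u a * a - u a)).
have cf : contX f := contXD contu (contX_affine _ _).
have fa : f a <= 0 by rewrite /f; lra.
have [p [ap pb fp Hp]] := exists_last_nonpos cf a0 (ltW ab) b1 fa.
exists p; split => // x xI; last by have := Hp x xI; rewrite /f /tan_right; lra.
apply/eqP; rewrite eq_le tan_right_le ?andbT; last lra.
have -> : tan_right u a x = dright u a * x + (u a - dright u a * a) by rewrite /tan_right; ring.
by apply: (convex_le_line cu a0 _ _ (le_trans pb b1)); rewrite /f in fp; lra.
Qed.

Lemma tan_left_contact : exists q, [/\ a <= q, q <= b,
  (forall x, q <= x <= b -> u x = tan_left u b x) &
  (forall x, a <= x < q -> tan_left u b x < u x)].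
Proof.
ab_bounds; pose f x := u x + (- dleft u b * x + (dleft u b * b - u b)).
have cf : contX f := contXD contu (contX_affine _ _).
have fb : f b <= 0 by rewrite /f; lra.
have [q [aq qb fq Hq]] := exists_first_nonpos cf a0 (ltW ab) b1 fb.
exists q; split => // x xI; last by have := Hq x xI; rewrite /f /tan_left; lra.
apply/eqP; rewrite eq_le tan_left_le ?andbT; last lra.
have -> : tan_left u b x = dleft u b * x + (u b - dleft u b * b) by rewrite /tan_left; ring.
rewrite /f in fq; apply: (convex_le_line cu (le_trans a0 aq) (_ : q <= x) (_ : x <= b) b1);
  lra.
Qed.

Lemma phi_off_gap p q : a <= p -> q <= b ->
  (forall x, a <= x <= p -> u x = tan_right u a x) ->
  (forall x, q <= x <= b -> u x = tan_left u b x) ->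
  forall x, (x <= p) || (q <= x) -> phi x = u x.
Proof.
ab_bounds => ap qb Hp Hq x xo.
case: (boolP ((x <= a) || (b <= x))) => [/phi_out //|/norP[]]; rewrite -!ltNge => ax xb.
rewrite phi_in; last lra.
suff -> : tan_max x = u x by lra.
apply/eqP; rewrite eq_le tan_max_le /=; last lra.
case/orP: xo => h; rewrite /tan_max le_max.
  by rewrite -(Hp x) ?lexx //; lra.
by rewrite -(Hq x) ?lexx ?orbT //; lra.
Qed.

Lemma max3_of_V_eq_u : (forall x, 0 <= x <= 1 -> V x = u x) ->
  exists l0 l1 l2, forall x, a <= x <= b -> u x = max3 l0 l1 l2 x.
Proof.
ab_bounds => HV.
have [p [ap pb Hp Hp']] := tan_right_contact.
have [q [aq qb Hq Hq']] := tan_left_contact.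
pose lr := (dright u a, u a - dright u a * a); pose ll := (dleft u b, u b - dleft u b * b).
have lrE x : line lr x = tan_right u a x by rewrite /line /tan_right /=; ring.
have llE x : line ll x = tan_left u b x by rewrite /line /tan_left /=; ring.
have lr_le x : 0 <= x <= 1 -> line lr x <= u x by rewrite lrE; exact: tan_right_le.
have ll_le x : 0 <= x <= 1 -> line ll x <= u x by rewrite llE; exact: tan_left_le.
have [qp|pq] := leP q p.
  exists lr, ll, ll => x xI; symmetry; apply: max3E; rewrite ?lr_le ?ll_le //; try lra.
  by case: (leP x p) => xp; [apply: Or31; rewrite lrE -Hp | apply: Or32; rewrite llE -Hq]; lra.
have gap x : p < x < q -> V x < phi x.
  move=> xI; rewrite HV ?phi_in; try lra.
  suff : tan_max x < u x by lra.
  by rewrite /tan_max gt_max Hp' ?Hq'; lra.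
have Vline := vex_affine_on_gap u_minorant contX_phi contX_V (le_trans a0 ap) pq
  (le_trans qb b1) gap.
rewrite -/V in Vline; set c := chord V p q in Vline.
pose lc := (c, V p - c * p).
have lcE x : line lc x = V p + c * (x - p) by rewrite /line /=; ring.
exists lr, lc, ll => x xI; symmetry; apply: max3E; rewrite ?lr_le ?ll_le //; try lra.
- rewrite lcE -HV; last lra.
  case: (boolP ((x <= p) || (q <= x))) => [xo|/norP[]].
    apply: chord_le_convex xo; rewrite ?(le_trans a0 ap) ?(le_trans qb b1) //; last lra.
    exact: V_minorant.1.
  by rewrite -!ltNge => ? ?; rewrite (Vline x); lra.
- case: (leP x p) => xp; first by apply: Or31; rewrite lrE -Hp; lra.
  case: (leP q x) => qx; first by apply: Or33; rewrite llE -Hq; lra.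
  by apply: Or32; rewrite lcE -HV ?(Vline x); lra.
Qed.

Lemma tan_right_max3 l0 l1 l2 : (forall x, a <= x <= b -> u x = max3 l0 l1 l2 x) ->
  exists2 l, l \in [:: l0; l1; l2] & forall x, tan_right u a x = line l x.
Proof.
ab_bounds => Hu; have ba : 0 < b - a by lra.
have [e e0 [l lI He]] := max3_near_right l0 l1 l2 a.
have [e' [e'0 e'e e'b]] := exists_pos_le2 e0 ba.
have uE x : a <= x <= a + e' -> u x = l.1 * x + l.2 by move=> xI; rewrite Hu ?He //; lra.
have ae1 : a + e' <= 1 by lra.
have da := dright_affine cu a0 e'0 ae1 uE.
by exists l => // x; rewrite /tan_right da /line uE ?lexx; [ring | lra].
Qed.

Lemma tan_left_max3 l0 l1 l2 : (forall x, a <= x <= b -> u x = max3 l0 l1 l2 x) ->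
  exists2 l, l \in [:: l0; l1; l2] & forall x, tan_left u b x = line l x.
Proof.
ab_bounds => Hu; have ba : 0 < b - a by lra.
have [e e0 [l lI He]] := max3_near_left l0 l1 l2 b.
have [e' [e'0 e'e e'b]] := exists_pos_le2 e0 ba.
have uE x : b - e' <= x <= b -> u x = l.1 * x + l.2 by move=> xI; rewrite Hu ?He //; lra.
have be0 : 0 <= b - e' by lra.
have db := dleft_affine cu be0 e'0 b1 uE.
by exists l => // x; rewrite /tan_left db /line uE ?lexx; [ring | lra].
Qed.

(* Between the contact sets of the two tangents, u exceeds both tangent lines, which
   are two of the three given lines, so u is the third line there. *)
Lemma V_eq_u_of_max3 l0 l1 l2 : (forall x, a <= x <= b -> u x = max3 l0 l1 l2 x) ->
  forall x, 0 <= x <= 1 -> V x = u x.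
Proof.
ab_bounds => Hu.
have [p [ap pb Hp Hp']] := tan_right_contact.
have [q [aq qb Hq Hq']] := tan_left_contact.
have off x : 0 <= x <= 1 -> (x <= p) || (q <= x) -> phi x = u x.
  by move=> _; exact: phi_off_gap ap qb Hp Hq x.
have [qp|pq] := leP q p.
  apply: (vex_eq_greatest u_minorant) => h [_ hphi] x x01.
  by rewrite -off //; [exact: hphi | case: (leP x p) => //= xp; rewrite (le_trans qp (ltW xp))].
have [lr lrI lrE] := tan_right_max3 Hu.
have [ll llI llE] := tan_left_max3 Hu.
have lrl : lr != ll.
  apply/eqP => E; have := Hp' b ltac:(lra).
  by rewrite lrE E -llE /tan_left subrr mulr0 addr0 ltxx.
have [lk lkI lkE] := max3_other lrI llI lrl.
have mid x : p < x < q -> u x = lk.1 * x + lk.2.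
  move=> xI; have ux := Hu x ltac:(lra).
  rewrite ux; apply: lkE; rewrite -ux.
    by rewrite -lrE; apply: Hp'; lra.
  by rewrite -llE; apply: Hq'; lra.
have [p0 q1] : 0 <= p /\ q <= 1 by split; lra.
have below : forall y, p < y < q -> u y - (lk.1 * y + lk.2) <= 0.
  by move=> y /mid ->; rewrite subrr.
have [up uq] := contX_le_endpoints (contXB contu (contX_affine lk.1 lk.2)) p0 pq q1 below.
by apply: (vex_eq_of_affine_gap u_minorant p0 (ltW pq) q1 off mid); lra.
Qed.

Lemma habE x : hab u a b x = V x - u x.
Proof. by []. Qed.

Lemma admissible_hab : admissible_direction slo shi u (hab u a b).
Proof.
move=> eps /[dup] e01 /andP[e0 e1]; split; apply: cvxK_slopes_in.
- apply: (eq_contX (f := fun x => (1 - eps) * u x + eps * V x)) => [x _|].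
    by rewrite habE; ring.
  exact: contXD (contXMl _ contu) (contXMl _ contX_V).
- apply: (eq_supported_in (f := fun x => eps * V x + (1 - eps) * u x)) => [x _|].
    by rewrite habE; ring.
  exact: supported_combination supported_V (convex_supported cu su) e01.
- apply: (eq_contX (f := fun x => (1 - eps) * u x + eps * W x)) => [x _|].
    by rewrite habE /W; ring.
  exact: contXD (contXMl _ contu) (contXMl _ (contXB (contXMl _ contu) contX_V)).
- apply: (eq_supported_in (f := fun x => eps * W x + (1 - eps) * u x)) => [x _|].
    by rewrite habE /W; ring.
  exact: supported_combination supported_W (convex_supported cu su) e01.
Qed.

Lemma hab_eq0P : (forall x, x \in @X R -> hab u a b x = 0) <->
  exists l0 l1 l2, forall x, a <= x <= b -> u x = max3 l0 l1 l2 x.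
Proof.
split => [H|[l0 [l1 [l2 Hu]]] x].
  by apply: max3_of_V_eq_u => x x01; apply/eqP; rewrite -subr_eq0 -habE H ?in_X.
by rewrite in_X habE => /(V_eq_u_of_max3 Hu) ->; rewrite subrr.
Qed.

End Envelope.

Section PointInterval.
Variables (R : realType) (u : R -> R) (a : R).

Lemma hab_point x : convex_on_X u -> 0 <= x <= 1 -> hab u a a x = 0.
Proof.
move=> cu x01; have gab0 y : gab u a a y = 0.
  rewrite /gab; case: ifP => // /andP[ay ya]; have -> : y = a by apply/eqP; rewrite eq_le ay ya.
  by rewrite /tan_right /tan_left !subrr !mulr0 !addr0 maxxx subrr.
have uphi : convex_minorant u (fun y => u y + gab u a a y) by split => // y _; rewrite gab0 addr0.
by rewrite /hab (vex_eq_at uphi x01) ?gab0 ?addr0 ?subrr.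
Qed.

End PointInterval.


Section Interval.
Variables (R : realType) (slo shi : R) (u : R -> R) (a b : R).
Hypotheses (cu : convex_on_X u) (contu : contX u) (su : slopes_in u slo shi).

Lemma admissible_hab_le : 0 <= a -> a <= b -> b <= 1 ->
  admissible_direction slo shi u (hab u a b).
Proof.
move=> a0; rewrite le_eqVlt => /orP[/eqP <- _|]; last exact: admissible_hab.
have h0 x : 0 <= x <= 1 -> hab u a a x = 0 by exact: hab_point.
move=> eps _; split; apply: cvxK_slopes_in;
  [apply: (eq_contX _ contu) | apply: (eq_supported_in _ (convex_supported cu su))
  |apply: (eq_contX _ contu) | apply: (eq_supported_in _ (convex_supported cu su))];
  by move=> x x01; rewrite h0 // mulr0 ?addr0 ?subr0.
Qed.

Lemma hab_eq0P_le : 0 <= a -> a <= b -> b <= 1 ->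
  (forall x, x \in @X R -> hab u a b x = 0) <->
  exists l0 l1 l2, forall x, a <= x <= b -> u x = max3 l0 l1 l2 x.
Proof.
move=> a0; rewrite le_eqVlt => /orP[/eqP <- _|ab b1]; last first.
  exact: (hab_eq0P cu contu su a0 ab b1).
split=> _; last by move=> x; rewrite in_X; exact: hab_point cu.
exists (0, u a), (0, u a), (0, u a) => x /andP[ax xa].
have -> : x = a by apply/eqP; rewrite eq_le ax xa.
by rewrite /max3 /line /= mul0r add0r !maxxx.
Qed.

End Interval.

Theorem lemma8 (R : realType) (slo shi : R) (ulo uhi u : R -> R) (a b : R) :
  slo <= shi ->
  cvxK ulo -> cvxK uhi -> slopes_in ulo slo shi -> slopes_in uhi slo shi ->
  (forall x, x \in @X R -> ulo x <= uhi x) ->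
  (* u belongs to the CFI *)
  cvxK u -> (forall x, x \in @X R -> ulo x <= u x <= uhi x) -> slopes_in u slo shi ->
  (* I = [a,b] \subseteq X with ulo < u < uhi on I *)
  0 <= a -> a <= b -> b <= 1 ->
  (forall x, a <= x <= b -> ulo x < u x < uhi x) ->
  (forall eps : R, 0 <= eps <= 1 ->
     (cvxK (fun x => u x + eps * hab u a b x) /\
      slopes_in (fun x => u x + eps * hab u a b x) slo shi) /\
     (cvxK (fun x => u x - eps * hab u a b x) /\
      slopes_in (fun x => u x - eps * hab u a b x) slo shi)) /\
  ((forall x, x \in @X R -> hab u a b x = 0) <->
   exists m0 c0 m1 c1 m2 c2 : R,
     forall x, a <= x <= b ->
       u x = Num.max (m0 * x + c0) (Num.max (m1 * x + c1) (m2 * x + c2))).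
Proof.
move=> _ _ _ _ _ _ [/contXP contu cu] _ su a0 ab b1 _.
split; first exact: admissible_hab_le.
rewrite (hab_eq0P_le cu contu su) //.
split => [[l0 [l1 [l2 Hu]]]|[m0 [c0 [m1 [c1 [m2 [c2 Hu]]]]]]].
  by exists l0.1, l0.2, l1.1, l1.2, l2.1, l2.2.
by exists (m0, c0), (m1, c1), (m2, c2).
Qed.
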